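(* Let $(S_n,X_n)_{n\ge 0}$ be an alternating non-homogeneous semi-Markov process with $S_0=1$, $X_0=0$, whose semi-Markov kernels $G_Y(x,\cdot)$ and $G_Z(x,\cdot)$ are, for each $x\ge 0$, Gamma distributions with shape and rate parameters $(k_Y(x),\lambda_Y(x))$ and $(k_Z(x),\lambda_Z(x))$ respectively, i.e. with densities $$g_T(x,\tau)=\frac{\lambda_T(x)^{k_T(x)}\tau^{k_T(x)-1}e^{-\lambda_T(x)\tau}}{\Gamma(k_T(x))},\qquad \tau\ge 0,\ T\in\{Y,Z\},$$ where $k_Y,k_Z:[0,\infty)\to[1,\infty)$ and $\lambda_Y,\lambda_Z:[0,\infty)\to(0,\infty)$ are measurable. Suppose there is $c>0$ such that $\lambda_Y(x)\le c$ and $\lambda_Z(x)\le c$ for all $x\ge 0$. Then $\mathbb P(X_\infty<\infty)=0$.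
   Context: Let $(S_n,X_n)_{n\ge0}$ be random variables on a probability space with $S_n\in\{0,1\}$, $0=X_0\le X_1\le X_2\le\cdots$, $S_0=1$, and alternating states: $S_n=1$ for even $n$ and $S_n=0$ for odd $n$. Write $T_{n+1}=X_{n+1}-X_n$ (sojourn times). The process is called an alternating non-homogeneous semi-Markov process with semi-Markov kernels $G_Y,G_Z$ if for every $n\ge 0$ the conditional distribution of $T_{n+1}$ given $(S_0,X_0),\dots,(S_n,X_n)$ depends only on $(S_n,X_n)$ (and not on $n$), with $\mathbb P(T_{n+1}\le \tau\mid S_n=1,X_n=x)=G_Y(x,\tau)$ and $\mathbb P(T_{n+1}\le\tau\mid S_n=0,X_n=x)=G_Z(x,\tau)$ for all $x,\tau\ge 0$; here for each $x\ge0$, $G_Y(x,\cdot)$ and $G_Z(x,\cdot)$ are distribution functions on $[0,\infty)$, jointly measurable in $(x,\tau)$, absolutely continuous with densities $g_Y(x,\cdot)$, $g_Z(x,\cdot)$. Periods spent in state $1$ are called $Y$-phases, periods in state $0$ are $Z$-phases. The explosion time is $X_\infty=\lim_{n\to\infty}X_n$. *)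

From HB Require Import structures.
From mathcomp Require Import all_boot all_order all_algebra.
From mathcomp Require Import all_classical all_reals all_analysis.
Set Implicit Arguments. Unset Strict Implicit. Unset Printing Implicit Defensive.
Import Order.TTheory GRing.Theory Num.Theory.
Import numFieldNormedType.Exports.
Local Open Scope classical_set_scope.
Local Open Scope ring_scope.

Definition Gammaf (R : realType) (k : R) : R :=
  fine (\int[@lebesgue_measure R]_(t in `[0%R, +oo[) ((t `^ (k - 1)) * expR (- t))%:E)%E.

Definition gamma_pdf (R : realType) (k l : R) (t : R) : R :=
  (l `^ k) * (t `^ (k - 1)) * expR (- (l * t)) / Gammaf k.

Definition gamma_cdf (R : realType) (k l : R) (tau : R) : \bar R :=
  (\int[@lebesgue_measure R]_(t in `[0%R, tau]) (gamma_pdf k l t)%:E)%E.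

(* The history sigma-algebra generated by X_0, ..., X_n (the states S_k are
   deterministic, S_k = 1 iff k is even, so they add no information). *)
Definition history (d : measure_display) (T : measurableType d) (R : realType)
  (X : nat -> T -> R) (n : nat) : set (set T) :=
  <<s [set: T], [set A | exists k, (k <= n)%N /\
        exists B : set R, measurable B /\ A = X k @^-1` B] >>.

(* Alternating non-homogeneous semi-Markov process, S_0 = 1 (even n: Y-phase,
   odd n: Z-phase), with kernels G_Y(x,.) = Gamma(kY x, lY x) and
   G_Z(x,.) = Gamma(kZ x, lZ x): for every n, every history event H of
   (S_0,X_0),...,(S_n,X_n) and every tau >= 0,
   P(H ∩ {T_(n+1) <= tau}) = E[1_H G_(S_n)(X_n, tau)]. *)
Definition gamma_alt_semiMarkov (d : measure_display) (T : measurableType d)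
  (R : realType) (P : probability T R) (X : nat -> T -> R)
  (kY lY kZ lZ : R -> R) : Prop :=
  (forall n, measurable_fun [set: T] (X n)) /\
  (forall w, X 0%N w = 0) /\
  (forall n w, X n w <= X n.+1 w) /\
  (forall n (H : set T) (tau : R), history X n H -> 0 <= tau ->
     P (H `&` [set w | X n.+1 w - X n w <= tau]) =
     (\int[P]_(w in H)
        (if odd n then gamma_cdf (kZ (X n w)) (lZ (X n w)) tau
         else gamma_cdf (kY (X n w)) (lY (X n w)) tau))%E).

Definition explosion_time (T : Type) (R : realType) (X : nat -> T -> R) (w : T)
  : \bar R := limn (fun n => (X n w)%:E).

From HB Require Import structures.
From mathcomp Require Import all_boot all_order all_algebra.
From mathcomp Require Import all_classical all_reals all_analysis.
From mathcomp.algebra_tactics Require Import ring lra.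
Import Order.TTheory GRing.Theory Num.Theory.
Import numFieldNormedType.Exports.
Set Implicit Arguments. Unset Strict Implicit.
Local Open Scope classical_set_scope.
Local Open Scope ring_scope.

(* Since the rates are bounded by [c], for a suitable [a > 0] a Gamma(k, l) sojourn with
   k >= 1 is shorter than [tau = a / c] with probability at most [q = a e^(a+1) < 1]:
   on [0, tau] the density is at most [l^k tau^(k-1) / Gamma(k)], while
   [Gamma(k) >= a^(k-1) e^(-(a+1))]. The bound holds conditionally on the history, so m
   consecutive sojourns are all shorter than [tau] with probability at most [q^m], and the
   event that all sojourns from some index on are shorter than [tau] is null. A finite
   explosion time forces this event, because the increments of a convergent sequence
   eventually become small. *)

(* No measurability is needed: both sides are suprema of integrals of simple functions. *)
Lemma ge0_le_integral_subset d (T : measurableType d) (R : realType)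
    (mu : {measure set T -> \bar R}) (D1 D2 : set T) (f g : T -> \bar R) :
  (forall x, D1 x -> (0 <= f x)%E) -> (forall x, D2 x -> (0 <= g x)%E) ->
  (forall x, D1 x -> D2 x /\ (f x <= g x)%E) ->
  (\int[mu]_(x in D1) f x <= \int[mu]_(x in D2) g x)%E.
Proof.
move=> f0 g0 fg; rewrite !ge0_integralE //.
apply: ereal_sup_le => _ [h hle <-]; exists h => //= x.
apply: (le_trans (hle x)); rewrite /patch.
case: ifPn => [/set_mem xD1|_].
  by have [xD2 le] := fg x xD1; rewrite ifT //; exact/mem_set.
by case: ifPn => // /set_mem /g0.
Qed.

Section gamma_distribution.
Variable R : realType.
Implicit Types k l t tau a : R.

Lemma Gammaf_ge0 k : 0 <= Gammaf k.
Proof.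
by rewrite fine_ge0 // integral_ge0 // => t _; rewrite lee_fin mulr_ge0 ?powR_ge0 ?expR_ge0.
Qed.

Lemma gamma_pdf_ge0 k l t : 0 <= gamma_pdf k l t.
Proof. by rewrite divr_ge0 ?Gammaf_ge0 // !mulr_ge0 ?powR_ge0 ?expR_ge0. Qed.

Lemma gamma_cdf_ge0 k l tau : (0 <= gamma_cdf k l tau)%E.
Proof. by apply: integral_ge0 => t _; rewrite lee_fin gamma_pdf_ge0. Qed.

(* When the Gamma integral diverges, [fine] turns it into [Gammaf k = 0]. *)
Lemma Gammaf_eq0_or_ge k a : 1 <= k -> 0 < a ->
  Gammaf k = 0 \/ a `^ (k - 1) * expR (- (a + 1)) <= Gammaf k.
Proof.
move=> k1 a0; rewrite /Gammaf.
set I := (\int[_]_(t in _) _)%E.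
have : ((a `^ (k - 1) * expR (- (a + 1)))%:E <= I)%E.
  have -> : ((a `^ (k - 1) * expR (- (a + 1)))%:E =
      \int[@lebesgue_measure R]_(t in `[a, (a + 1)%R])
        (a `^ (k - 1) * expR (- (a + 1)))%:E)%E.
    rewrite integral_cst //= lebesgue_measure_itv /= lte_fin ltrDl ltr01.
    by rewrite -EFinD addrAC subrr add0r mule1.
  apply: ge0_le_integral_subset => [t _|t _|t /=].
  - by rewrite lee_fin mulr_ge0 ?expR_ge0 ?powR_ge0.
  - by rewrite lee_fin mulr_ge0 ?powR_ge0 ?expR_ge0.
  rewrite !in_itv /= andbT => /andP[a_le_t t_le]; have t0 := le_trans (ltW a0) a_le_t.
  split=> //; rewrite lee_fin ler_pM ?powR_ge0 ?expR_ge0 //; last by rewrite ler_expR lerN2.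
  by apply: ge0_ler_powR; rewrite ?nnegrE ?subr_ge0 ?(ltW a0).
by case: I => [r||] //= low; [right; rewrite -lee_fin | left].
Qed.

Lemma gamma_cdf_le_powR k l tau : 1 <= k -> 0 <= l -> 0 < tau ->
  (gamma_cdf k l tau <= ((l * tau) `^ k / Gammaf k)%:E)%E.
Proof.
move=> k1 l0 tau0; have k0 : 0 < k := lt_le_trans ltr01 k1.
set C := l `^ k * tau `^ (k - 1) / Gammaf k.
have -> : (l * tau) `^ k / Gammaf k = tau * C.
  by rewrite /C powRM ?(ltW tau0) // -(mulr_powRB1 (ltW tau0) k0); ring.
apply: (@le_trans _ _ (\int[@lebesgue_measure R]_(t in `[0%R, tau]) C%:E)%E).
  apply: ge0_le_integral_subset => [t _|t _|t tD].
  - by rewrite lee_fin gamma_pdf_ge0.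
  - by rewrite lee_fin /C divr_ge0 ?Gammaf_ge0 ?mulr_ge0 ?powR_ge0.
  split => //; move: tD => /=; rewrite in_itv /= => /andP[t0 tt].
  rewrite lee_fin /gamma_pdf /C ler_wpM2r ?invr_ge0 ?Gammaf_ge0 //.
  rewrite -[leRHS]mulr1 ler_pM ?mulr_ge0 ?powR_ge0 ?expR_ge0 //.
    by rewrite ler_wpM2l ?powR_ge0 // ge0_ler_powR ?nnegrE ?subr_ge0 ?(ltW tau0).
  by rewrite expR_le1 oppr_le0 mulr_ge0.
rewrite integral_cst //= lebesgue_measure_itv /= lte_fin tau0.
by rewrite oppr0 adde0 -EFinM mulrC.
Qed.

Lemma gamma_cdf_le k l tau a :
  1 <= k -> 0 < l -> 0 < tau -> 0 < a -> l * tau <= a ->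
  (gamma_cdf k l tau <= (a * expR (a + 1))%:E)%E.
Proof.
move=> k1 l0 tau0 a0 lta; apply: (le_trans (gamma_cdf_le_powR k1 (ltW l0) tau0)).
have k0 : 0 < k := lt_le_trans ltr01 k1.
rewrite lee_fin; have [->|Gk] := Gammaf_eq0_or_ge k1 a0.
  by rewrite invr0 mulr0 mulr_ge0 ?expR_ge0 ?ltW.
have Gk0 : 0 < Gammaf k by apply: lt_le_trans Gk; rewrite mulr_gt0 ?powR_gt0 ?expR_gt0.
rewrite ler_pdivrMr //; apply: le_trans (_ : a `^ k <= _).
  by rewrite ge0_ler_powR ?nnegrE ?(ltW a0) ?mulr_ge0 ?(ltW l0) ?(ltW tau0) ?(ltW k0).
rewrite -(mulr_powRB1 (ltW a0) k0) -mulrA ler_wpM2l ?(ltW a0) //.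
have -> : a `^ (k - 1) = expR (a + 1) * (a `^ (k - 1) * expR (- (a + 1))).
  by rewrite mulrCA -expRD addrN expR0 mulr1.
by rewrite ler_wpM2l ?expR_ge0.
Qed.

End gamma_distribution.

Lemma exists_mul_expR_lt1 (R : realType) :
  exists2 a : R, 0 < a & a * expR (a + 1) < 1.
Proof.
have e0 : 0 < expR (-2 : R) := expR_gt0 _.
have e1 : expR (-2 : R) < 1 by rewrite expR_lt1 oppr_lt0.
exists (expR (-2) / 2); first by rewrite divr_gt0.
have : expR (expR (-2) / 2 + 1) <= expR 2 :> R by rewrite ler_expR; lra.
have : expR (-2) * expR 2 = 1 :> R by rewrite -expRD addNr expR0.
nra.
Qed.

Section nondecreasing_sequence.
Variables (R : realType) (u : nat -> R).
Hypothesis u_nd : forall n, u n <= u n.+1.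

Let limn_sup : limn (fun n => (u n)%:E) = ereal_sup (range (fun n => (u n)%:E)).
Proof.
apply: cvg_lim => //; apply: ereal_nondecreasing_cvgn => m n mn.
by rewrite lee_fin; apply: (nondecreasing_seqP u).1.
Qed.

Let u0_le_limn : ((u 0%N)%:E <= limn (fun n => (u n)%:E))%E.
Proof. by rewrite limn_sup; apply: ereal_sup_ubound; exists 0%N. Qed.

Lemma nondecreasing_limn_ltey :
  (limn (fun n => (u n)%:E) < +oo)%E <-> exists M : nat, forall n, u n <= M%:R.
Proof.
split=> [|[M uM]].
  move: u0_le_limn; rewrite limn_sup.
  case: ereal_sup (@ereal_sup_ubound _ (range (fun n => (u n)%:E))) => [s||] // ub _ _.
  exists (Num.Def.archi_bound `|s|) => n.
  apply: (@le_trans _ _ s); first by rewrite -lee_fin; apply: ub; exists n.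
  exact/ltW/(le_lt_trans (ler_norm s))/archi_boundP.
rewrite limn_sup; apply: le_lt_trans (ltry M%:R).
by apply: ge_ereal_sup => _ [n _ <-]; rewrite lee_fin.
Qed.

Lemma nondecreasing_limn_ltey_increments tau : 0 < tau ->
  (limn (fun n => (u n)%:E) < +oo)%E ->
  exists N, forall i, u (N + i).+1 - u (N + i) <= tau.
Proof.
move=> tau0; move: u0_le_limn; rewrite limn_sup.
case E: ereal_sup => [s||] // _ _.
have : ((s - tau)%:E < ereal_sup (range (fun n => (u n)%:E)))%E.
  by rewrite E lte_fin ltrBlDr ltrDl.
move=> /ereal_sup_gt[_ [N _ <-]]; rewrite lte_fin => uN; exists N => i.
have ub : u (N + i).+1 <= s.
  by rewrite -lee_fin -E; apply: ereal_sup_ubound; exists (N + i).+1.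
have := (nondecreasing_seqP u).1 u_nd _ _ (leq_addr i N); lra.
Qed.

End nondecreasing_sequence.

Section history.
Variables (d : measure_display) (T : measurableType d) (R : realType).
Variable X : nat -> T -> R.

Let generator n := [set A : set T | exists k, (k <= n)%N /\
  exists B : set R, measurable B /\ A = X k @^-1` B].

(* [history X n] is, by definition, the class of measurable sets of [historyType n]. *)
Let historyType n := g_sigma_algebraType (generator n).

Let history_measurable_fun n k :
  (k <= n)%N -> measurable_fun [set: historyType n] (X k).
Proof.
move=> kn _ B mB; rewrite setTI; apply: sub_sigma_algebra.
by exists k; split => //; exists B.
Qed.

Lemma historyT n : history X n [set: T].
Proof. exact: (@measurableT _ (historyType n)). Qed.

Lemma historyI n A B : history X n A -> history X n B -> history X n (A `&` B).
Proof. exact: (@measurableI _ (historyType n)). Qed.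

Lemma history_increment n j tau : (j < n)%N ->
  history X n [set w | X j.+1 w - X j w <= tau].
Proof.
move=> jn; have := measurable_realfun.measurable_funB (history_measurable_fun jn)
  (history_measurable_fun (ltnW jn)) measurableT (measurable_itv `]-oo, tau]).
by rewrite setTI; congr (history X n _); apply/seteqP; split => w; rewrite /= in_itv.
Qed.

Lemma history_measurable n A :
  (forall k, measurable_fun [set: T] (X k)) -> history X n A -> measurable A.
Proof.
move=> mX; apply: smallest_sub; first exact: sigma_algebra_measurable.
by move=> _ [k [_ [B [mB ->]]]]; rewrite -[X k @^-1` B]setTI; exact: mX.
Qed.

End history.

Section geometric_decay.
Variables (d : measure_display) (T : measurableType d) (R : realType).
Variables (P : probability T R) (F : nat -> set (set T)) (B : nat -> set T) (q : R).
(* [F n] plays the role of the history at time [n]; [PB] bounds the conditional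
   probability of [B n] given it by [q]. *)
Hypothesis F_measurable : forall n A, F n A -> measurable A.
Hypothesis FT : forall n, F n [set: T].
Hypothesis FI : forall n A C, F n A -> F n C -> F n (A `&` C).
Hypothesis FB : forall j n, (j < n)%N -> F n (B j).
Hypotheses (q_ge0 : 0 <= q) (q_lt1 : q < 1).
Hypothesis PB : forall n A, F n A -> (P (A `&` B n) <= q%:E * P A)%E.

Lemma probability_bigcap_ord_le N m :
  (P (\bigcap_(i < m) B (N + i)) <= (q ^+ m)%:E)%E.
Proof.
rewrite bigcap_mkord; elim: m => [|m IH]; first by rewrite big_ord0 probability_setT.
have FNm : F (N + m) (\big[setI/[set: T]]_(i < m) B (N + i)).
  by apply: (big_ind (F (N + m)) (FT _) (@FI _)) => i _; apply: FB; rewrite ltn_add2l.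
rewrite big_ord_recr /= (le_trans (PB FNm)) // exprS EFinM.
by rewrite lee_wpmul2l ?lee_fin.
Qed.

Lemma bigcap_tail_negligible N : P.-negligible (\bigcap_i B (N + i)).
Proof.
have mB n : measurable (B n) := F_measurable (FB (ltnSn n)).
have mBN : measurable (\bigcap_i B (N + i)) by apply: bigcapT_measurable.
suff : P (\bigcap_i B (N + i)) = 0%E by exists (\bigcap_i B (N + i)); split.
have le_q m : (P (\bigcap_i B (N + i)) <= (q ^+ m)%:E)%E.
  apply: (le_trans _ (probability_bigcap_ord_le N m)); apply: le_measure; rewrite ?inE //.
    by rewrite bigcap_mkord; apply: bigsetI_measurable.
  by move=> w Bw i _; apply: Bw.
have p_fin : P (\bigcap_i B (N + i)) \is a fin_num.
  by rewrite ge0_fin_numE // (le_lt_trans (probability_le1 P mBN)) ?ltry.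
move: le_q; rewrite -(fineK p_fin) => le_q; congr (_%:E).
apply/eqP; rewrite eq_le fine_ge0 ?measure_ge0 // andbT.
have cvg_q : (fun m => q ^+ m) @ \oo --> (0 : R) by apply: cvg_expr; rewrite ger0_norm.
rewrite -(cvg_lim _ cvg_q) //; apply: limr_ge; first exact: cvgP cvg_q.
by apply: nearW => m; rewrite -lee_fin.
Qed.

End geometric_decay.

Lemma measurable_explosion_time_lty d (T : measurableType d) (R : realType)
    (X : nat -> T -> R) :
  (forall n, measurable_fun [set: T] (X n)) -> (forall n w, X n w <= X n.+1 w) ->
  measurable [set w | (explosion_time X w < +oo)%E].
Proof.
move=> mX Xnd.
have -> : [set w | (explosion_time X w < +oo)%E] =
    \bigcup_(M : nat) \bigcap_n (X n @^-1` `]-oo, M%:R]).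
  apply/seteqP; split => w /=.
    move=> /(nondecreasing_limn_ltey (Xnd^~ w))[M XM].
    by exists M => // n _ /=; rewrite in_itv /= XM.
  move=> [M _ XM]; apply/(nondecreasing_limn_ltey (Xnd^~ w)); exists M => n.
  by have := XM n I; rewrite /= in_itv.
apply: bigcupT_measurable => M; apply: bigcapT_measurable => n.
by rewrite -[X in measurable X]setTI; apply: mX.
Qed.

Section gamma_semiMarkov.
Variables (d : measure_display) (T : measurableType d) (R : realType).
Variables (P : probability T R) (X : nat -> T -> R) (kY lY kZ lZ : R -> R) (c : R).
Hypotheses (kY1 : forall x, 0 <= x -> 1 <= kY x) (kZ1 : forall x, 0 <= x -> 1 <= kZ x).
Hypotheses (lY0 : forall x, 0 <= x -> 0 < lY x) (lZ0 : forall x, 0 <= x -> 0 < lZ x).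
Hypothesis c0 : 0 < c.
Hypotheses (lYc : forall x, 0 <= x -> lY x <= c) (lZc : forall x, 0 <= x -> lZ x <= c).
Hypothesis X_semiMarkov : gamma_alt_semiMarkov P X kY lY kZ lZ.

Let X_ge0 n w : 0 <= X n w.
Proof.
have [_ [X0 [Xnd _]]] := X_semiMarkov.
by rewrite -(X0 w); apply: (nondecreasing_seqP (X^~ w)).1.
Qed.

Let sojourn_cdf_le n w a : 0 < a ->
  ((if odd n then gamma_cdf (kZ (X n w)) (lZ (X n w)) (a / c)
    else gamma_cdf (kY (X n w)) (lY (X n w)) (a / c)) <= (a * expR (a + 1))%:E)%E.
Proof.
move=> a0; have x0 := X_ge0 n w.
have tau0 : 0 < a / c by rewrite divr_gt0.
have lta l : 0 < l -> l <= c -> l * (a / c) <= a.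
  by move=> l0 lc; rewrite mulrA ler_pdivrMr // mulrC ler_wpM2l // ltW.
by case: ifP => _; apply: gamma_cdf_le; rewrite ?lta ?kY1 ?kZ1 ?lY0 ?lZ0 ?lYc ?lZc.
Qed.

Lemma short_sojourn_le n H a : 0 < a -> history X n H ->
  (P (H `&` [set w | (X n.+1 w - X n w <= a / c)%R]) <= (a * expR (a + 1))%:E * P H)%E.
Proof.
have [mX [_ [_ HX]]] := X_semiMarkov.
move=> a0 hH; rewrite HX ?divr_ge0 ?(ltW a0) ?(ltW c0) //.
rewrite -integral_cst; last exact: history_measurable hH.
apply: ge0_le_integral_subset => [w _|w _|w Hw].
- by case: ifP => _; apply: gamma_cdf_ge0.
- by rewrite lee_fin mulr_ge0 ?expR_ge0 ?ltW.
- by split => //; apply: sojourn_cdf_le.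
Qed.

End gamma_semiMarkov.

Unset Implicit Arguments.

Theorem proposition1 (d : measure_display) (T : measurableType d) (R : realType)
  (P : probability T R) (X : nat -> T -> R) (kY lY kZ lZ : R -> R) (c : R) :
  measurable_fun [set x : R | 0 <= x] kY ->
  measurable_fun [set x : R | 0 <= x] lY ->
  measurable_fun [set x : R | 0 <= x] kZ ->
  measurable_fun [set x : R | 0 <= x] lZ ->
  (forall x, 0 <= x -> 1 <= kY x) -> (forall x, 0 <= x -> 1 <= kZ x) ->
  (forall x, 0 <= x -> 0 < lY x) -> (forall x, 0 <= x -> 0 < lZ x) ->
  0 < c ->
  (forall x, 0 <= x -> lY x <= c) -> (forall x, 0 <= x -> lZ x <= c) ->
  gamma_alt_semiMarkov P X kY lY kZ lZ ->
  P [set w | (explosion_time X w < +oo)%E] = 0%E.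
Proof.
move=> _ _ _ _ kY1 kZ1 lY0 lZ0 c0 lYc lZc HX.
have [mX [_ [Xnd _]]] := HX.
have [a a0 q_lt1] := exists_mul_expR_lt1 R.
have tau0 : 0 < a / c by rewrite divr_gt0.
pose short n := [set w | X n.+1 w - X n w <= a / c].
have short_tail_null N : P.-negligible (\bigcap_i short (N + i)).
  apply: (bigcap_tail_negligible (F := history X) (q := a * expR (a + 1))) => //.
  - by move=> n A; apply: history_measurable.
  - exact: historyT.
  - exact: historyI.
  - by move=> j n; apply: history_increment.
  - by rewrite mulr_ge0 ?expR_ge0 ?ltW.
  - by move=> n A; apply: (short_sojourn_le kY1 kZ1 lY0 lZ0 c0 lYc lZc HX a0).
apply: (measure_negligible (measurable_explosion_time_lty mX Xnd)).
apply: (negligibleS _ (negligible_bigcup short_tail_null)).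
move=> w /(nondecreasing_limn_ltey_increments (Xnd^~ w) tau0)[N XN].
by exists N => // i _; apply: XN.
Qed.
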